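(* Let $d\ge 1$, let $\Omega=\operatorname{diag}(\omega_j)_{j=1}^d\in\mathbb{R}^{d\times d}$ with $\omega_j> 0$ for all $j$, let $\omega=\min_j\omega_j$, and let $A\in\mathbb{C}^{d\times d}$ be self-adjoint. Let $0<h\le 1$ and let $\psi_1,\phi\colon\mathbb{R}\to\mathbb{R}$ be even functions such that $\psi_1(\xi)=\operatorname{sinc}(\xi)\phi(\xi)$ for all $\xi\in\mathbb{R}$ and, for constants $c_0,c_1\ge 0$, \[ |\psi_1(\xi)|\le c_0,\qquad |\phi(\xi)|\le c_0,\qquad |\phi(\xi)-1|\le c_1|\xi|\qquad\text{for all }\xi\in\mathbb{R}. \] Assume $\omega\ge \tfrac12 c_0^2\|A\|+1$. Set $\Psi_1=\psi_1(h\Omega)$, $\Phi=\phi(h\Omega)$. For given $q_0,\dot q_0\in\mathbb{C}^d$, define $(q_n,\dot q_n)_{n\ge 0}$ recursively by \begin{align*} q_{n+1} &= \cos(h\Omega) q_n + h\operatorname{sinc}(h\Omega) \dot{q}_n - \tfrac12 h^2 \operatorname{sinc}(h\Omega) \Psi_1 A\Phi q_n,\\ \dot{q}_{n+1} &= -\Omega \sin(h\Omega) q_n + \cos(h\Omega) \dot{q}_n - \tfrac12 h \big( \cos(h\Omega) \Psi_1 A\Phi q_n + \Psi_1 A\Phi q_{n+1}\big). \end{align*} Then $\|q_n\|\le C$ for all $n$, with a constant $C$ depending only on $c_0$, $\|A\|$, $\|q_0\|$, $\|\Omega q_0\|$ and $\|\dot q_0\|$.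
   Context: $\|\cdot\|$ is the Euclidean norm on $\mathbb{C}^d$ and, for matrices, the induced operator norm. $\operatorname{sinc}(\xi)=\sin(\xi)/\xi$ for $\xi\ne0$ and $\operatorname{sinc}(0)=1$. For a function $f\colon\mathbb{R}\to\mathbb{R}$, $f(h\Omega)$ denotes the diagonal matrix $\operatorname{diag}(f(h\omega_j))_{j=1}^d$. *)

From HB Require Import structures.
From mathcomp Require Import all_boot all_order all_algebra.
From mathcomp Require Import all_classical all_reals all_analysis.
From mathcomp Require Import complex.
Set Implicit Arguments. Unset Strict Implicit. Unset Printing Implicit Defensive.
Import Order.TTheory GRing.Theory Num.Theory.
Local Open Scope ring_scope.
Local Open Scope complex_scope.

Section Defs.
Variable R : realType.

Definition sinc (x : R) : R := if x == 0 then 1 else sin x / x.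

Definition vnorm (d : nat) (v : 'cV[R[i]]_d) : R :=
  Num.sqrt (\sum_(j < d) ((@complex.Re R (v j ord0)) ^+ 2 + (@complex.Im R (v j ord0)) ^+ 2)).

Definition opnorm (d : nat) (A : 'M[R[i]]_d) : R :=
  sup [set vnorm (A *m v) | v in [set v : 'cV[R[i]]_d | vnorm v <= 1]]%classic.

Definition adjmx (d : nat) (A : 'M[R[i]]_d) : 'M[R[i]]_d :=
  \matrix_(i, j) (A j i)^*.
Definition selfadjoint (d : nat) (A : 'M[R[i]]_d) : Prop := adjmx A = A.

Definition diagR (d : nat) (w : 'I_d -> R) : 'M[R[i]]_d :=
  diag_mx (\row_j (w j)%:C).

(* f(h Omega) = diag(f(h w_j)) *)
Definition fun_mx (d : nat) (f : R -> R) (h : R) (w : 'I_d -> R) : 'M[R[i]]_d :=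
  diagR (fun j => f (h * w j)).

Definition step (d : nat) (w : 'I_d -> R) (A : 'M[R[i]]_d) (h : R)
    (psi1 phi : R -> R) (x : 'cV[R[i]]_d * 'cV[R[i]]_d) :
    'cV[R[i]]_d * 'cV[R[i]]_d :=
  let Om := diagR w in
  let cosh := fun_mx cos h w in
  let sinh := fun_mx sin h w in
  let sinch := fun_mx sinc h w in
  let Psi1 := fun_mx psi1 h w in
  let Phi := fun_mx phi h w in
  let hC := h%:C in
  let q := x.1 in let qd := x.2 in
  let q' := cosh *m q + hC *: (sinch *m qd)
            - (2^-1 * h ^+ 2)%:C *: (sinch *m Psi1 *m A *m Phi *m q) in
  let qd' := - (Om *m sinh *m q) + cosh *m qd
             - (2^-1 * h)%:C *: (cosh *m Psi1 *m A *m Phi *m q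
                                 + Psi1 *m A *m Phi *m q') in
  (q', qd').

Definition traj (d : nat) (w : 'I_d -> R) (A : 'M[R[i]]_d) (h : R)
    (psi1 phi : R -> R) (q0 qd0 : 'cV[R[i]]_d) (n : nat) :
    'cV[R[i]]_d * 'cV[R[i]]_d :=
  iter n (step w A h psi1 phi) (q0, qd0).

End Defs.

(* Write F := Phi A Phi, which is symmetric for the real inner product
   <u, v> := Re (u^* v) and has norm at most m := c0^2 ||A||, and shift the velocity
   to v_n := qd_n - h/2 sinc(h Om) F q_n.  Since h Om sinc(h Om) = sin(h Om) and
   Psi1 = sinc(h Om) Phi, one step of the scheme reads
     q_{n+1} = cos(h Om) q_n + h sinc(h Om) v_n,
     v_{n+1} + h sinc(h Om) F q_{n+1} = - sin(h Om) Om q_n + cos(h Om) v_n,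
   i.e. (Om q_{n+1}, v_{n+1} + h sinc(h Om) F q_{n+1}) is a rotation of (Om q_n, v_n).
   Expanding the rotation invariance and using the symmetry of F and sinc(h Om)
   shows that the modified energy
     E_n := |v_n|^2 + |Om q_n|^2 + <q_{n+1}, F q_n>
   is exactly conserved.  As omega >= m/2 + 1, Young's inequality with weight
   m + 1 on the cross term gives |q_n|^2 <= 2 E_n, while
   2 E_0 <= 3 (2 |qd_0|^2 + m^2 |q_0|^2 + |Om q_0|^2). *)

From mathcomp Require Import all_boot all_order all_algebra.
From mathcomp Require Import all_classical all_reals all_analysis.
From mathcomp Require Import complex.
From mathcomp Require Import ring lra.
Import Order.TTheory GRing.Theory Num.Theory.
Local Open Scope ring_scope.
Local Open Scope complex_scope.

Set Implicit Arguments.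
Unset Strict Implicit.
Unset Printing Implicit Defensive.

Section ComplexParts.
Variable R : realFieldType.
Implicit Types (a b : R[i]) (k : R).
Local Notation Re := (@complex.Re R).
Local Notation Im := (@complex.Im R).

Lemma ReD a b : Re (a + b) = Re a + Re b. Proof. by case: a b => ? ? [? ?]. Qed.
Lemma ImD a b : Im (a + b) = Im a + Im b. Proof. by case: a b => ? ? [? ?]. Qed.
Lemma ReN a : Re (- a) = - Re a. Proof. by case: a. Qed.
Lemma ImN a : Im (- a) = - Im a. Proof. by case: a. Qed.
Lemma ReM a b : Re (a * b) = Re a * Re b - Im a * Im b.
Proof. by case: a b => ? ? [? ?]. Qed.
Lemma ImM a b : Im (a * b) = Re a * Im b + Im a * Re b.
Proof. by case: a b => ? ? [? ?] /=; ring. Qed.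
Lemma ReMr k a : Re (k%:C * a) = k * Re a.
Proof. by rewrite ReM /= mul0r subr0. Qed.
Lemma ImMr k a : Im (k%:C * a) = k * Im a.
Proof. by rewrite ImM /= mul0r addr0. Qed.

Lemma Re_sum I (r : seq I) (P : pred I) (F : I -> R[i]) :
  Re (\sum_(i <- r | P i) F i) = \sum_(i <- r | P i) Re (F i).
Proof. by elim/big_rec2: _ => [|i x y _ <-]; rewrite ?ReD. Qed.
Lemma Im_sum I (r : seq I) (P : pred I) (F : I -> R[i]) :
  Im (\sum_(i <- r | P i) F i) = \sum_(i <- r | P i) Im (F i).
Proof. by elim/big_rec2: _ => [|i x y _ <-]; rewrite ?ImD. Qed.

End ComplexParts.

Lemma sqr_le_of_normr_le (R : realDomainType) (k l : R) :
  `|k| <= l -> k ^+ 2 <= l ^+ 2.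
Proof.
move=> kl; rewrite -real_normK ?num_real // lerXn2r ?nnegrE //.
exact: le_trans kl.
Qed.

Section RealInnerProduct.
Variables (R : realType) (d : nat).
Implicit Types (u v x : 'cV[R[i]]_d) (k : R).
Local Notation Re := (@complex.Re R).
Local Notation Im := (@complex.Im R).

Definition rdot u v : R :=
  \sum_(j < d) (Re (u j ord0) * Re (v j ord0) + Im (u j ord0) * Im (v j ord0)).

Lemma vnormE u : vnorm u = Num.sqrt (rdot u u).
Proof.
by rewrite /vnorm /rdot; congr Num.sqrt; apply: eq_bigr => j _; rewrite !expr2.
Qed.

Lemma rdot_ge0 u : 0 <= rdot u u.
Proof. by apply: sumr_ge0 => j _; rewrite -!expr2 addr_ge0 ?sqr_ge0. Qed.

Lemma sqr_vnorm u : vnorm u ^+ 2 = rdot u u.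
Proof. by rewrite vnormE sqr_sqrtr ?rdot_ge0. Qed.

Lemma rdotC u v : rdot u v = rdot v u.
Proof. by apply: eq_bigr => j _; ring. Qed.

Lemma rdotDl u v x : rdot (u + v) x = rdot u x + rdot v x.
Proof.
by rewrite /rdot -big_split; apply: eq_bigr => j _; rewrite !mxE ReD ImD /=; ring.
Qed.

Lemma rdotNl u v : rdot (- u) v = - rdot u v.
Proof. by rewrite /rdot -sumrN; apply: eq_bigr => j _; rewrite !mxE ReN ImN; ring. Qed.

Lemma rdotZl k u v : rdot (k%:C *: u) v = k * rdot u v.
Proof.
by rewrite /rdot mulr_sumr; apply: eq_bigr => j _; rewrite !mxE ReMr ImMr; ring.
Qed.

Lemma rdotBl u v x : rdot (u - v) x = rdot u x - rdot v x.
Proof. by rewrite rdotDl rdotNl. Qed.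

Lemma rdotDr u v x : rdot x (u + v) = rdot x u + rdot x v.
Proof. by rewrite rdotC rdotDl !(rdotC x). Qed.

Lemma rdotBr u v x : rdot x (u - v) = rdot x u - rdot x v.
Proof. by rewrite rdotC rdotBl !(rdotC x). Qed.

Lemma rdotZr k u v : rdot u (k%:C *: v) = k * rdot u v.
Proof. by rewrite rdotC rdotZl rdotC. Qed.

Lemma rdot_sqrD u v : rdot (u + v) (u + v) = rdot u u + 2 * rdot u v + rdot v v.
Proof. by rewrite rdotDl !rdotDr (rdotC v u); ring. Qed.

Lemma rdot_sqrB u v : rdot (u - v) (u - v) = rdot u u - 2 * rdot u v + rdot v v.
Proof. by rewrite rdotBl !rdotBr (rdotC v u); ring. Qed.

Lemma rdot_young k u v : 2 * k * rdot u v <= k ^+ 2 * rdot u u + rdot v v.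
Proof.
have := rdot_ge0 (k%:C *: u - v).
by rewrite rdot_sqrB !rdotZl !rdotZr; lra.
Qed.

Lemma rdot_sqrB_le u v : rdot (u - v) (u - v) <= 2 * rdot u u + 2 * rdot v v.
Proof. by have := rdot_young (-1) u v; rewrite rdot_sqrB; lra. Qed.

Lemma rdot_eq0 u : rdot u u = 0 -> u = 0.
Proof.
move=> /eqP; rewrite psumr_eq0 => [/allP u0|j _]; last first.
  by rewrite -!expr2 addr_ge0 ?sqr_ge0.
apply/matrixP => j k; rewrite ord1 mxE.
have := u0 j (mem_index_enum j); rewrite -!expr2 paddr_eq0 ?sqr_ge0 //.
by rewrite !sqrf_eq0; case: (u j ord0) => a b /= /andP[/eqP-> /eqP->].
Qed.

Lemma vnorm0 : vnorm (0 : 'cV[R[i]]_d) = 0.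
Proof. by rewrite vnormE /rdot big1 ?sqrtr0 // => j _; rewrite mxE /=; ring. Qed.

Lemma vnormZ k u : vnorm (k%:C *: u) = `|k| * vnorm u.
Proof.
by rewrite !vnormE rdotZl rdotZr mulrA -expr2 sqrtrM ?sqr_ge0 // sqrtr_sqr.
Qed.

Lemma normr_Re_le_vnorm u j : `|Re (u j ord0)| <= vnorm u.
Proof.
rewrite vnormE -(sqrtr_sqr (Re _)) ler_sqrt ?rdot_ge0 // /rdot (bigD1 j) //=.
rewrite -!expr2 -addrA lerDl addr_ge0 ?sqr_ge0 // sumr_ge0 // => i _.
by rewrite -!expr2 addr_ge0 ?sqr_ge0.
Qed.

Lemma normr_Im_le_vnorm u j : `|Im (u j ord0)| <= vnorm u.
Proof.
rewrite vnormE -(sqrtr_sqr (Im _)) ler_sqrt ?rdot_ge0 // /rdot (bigD1 j) //=.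
rewrite -!expr2 addrAC lerDr addr_ge0 ?sqr_ge0 // sumr_ge0 // => i _.
by rewrite -!expr2 addr_ge0 ?sqr_ge0.
Qed.

Lemma diagR_mulmxE (f : 'I_d -> R) u i j : (diagR f *m u) i j = (f i)%:C * u i j.
Proof. by rewrite /diagR mul_diag_mx !mxE. Qed.

Lemma diagR_mulmxC (f g : 'I_d -> R) u :
  diagR f *m (diagR g *m u) = diagR g *m (diagR f *m u).
Proof. by apply/matrixP => i j; rewrite !diagR_mulmxE mulrCA. Qed.

Lemma rdot_diagR (f : 'I_d -> R) u v : rdot (diagR f *m u) v = rdot u (diagR f *m v).
Proof. by apply: eq_bigr => j _; rewrite !diagR_mulmxE !ReMr !ImMr; ring. Qed.

Lemma rdot_diagR_sqr (f : 'I_d -> R) u :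
  rdot (diagR f *m u) (diagR f *m u) =
  \sum_(j < d) f j ^+ 2 * (Re (u j ord0) ^+ 2 + Im (u j ord0) ^+ 2).
Proof. by apply: eq_bigr => j _; rewrite !diagR_mulmxE !ReMr !ImMr; ring. Qed.

Lemma rdot_diagR_le (f : 'I_d -> R) (K : R) u : (forall j, f j ^+ 2 <= K) ->
  rdot (diagR f *m u) (diagR f *m u) <= K * rdot u u.
Proof.
move=> fK; rewrite rdot_diagR_sqr /rdot mulr_sumr; apply: ler_sum => j _.
by rewrite -!expr2 ler_wpM2r ?addr_ge0 ?sqr_ge0.
Qed.

Lemma rdot_diagR_ge (f : 'I_d -> R) (K : R) u : (forall j, K <= f j ^+ 2) ->
  K * rdot u u <= rdot (diagR f *m u) (diagR f *m u).
Proof.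
move=> Kf; rewrite rdot_diagR_sqr /rdot mulr_sumr; apply: ler_sum => j _.
by rewrite -!expr2 ler_wpM2r ?addr_ge0 ?sqr_ge0.
Qed.

Lemma rdot_rotation (c s : 'I_d -> R) u v : (forall j, c j ^+ 2 + s j ^+ 2 = 1) ->
  rdot (diagR c *m u + diagR s *m v) (diagR c *m u + diagR s *m v)
  + rdot (- (diagR s *m u) + diagR c *m v) (- (diagR s *m u) + diagR c *m v)
  = rdot u u + rdot v v.
Proof.
move=> cs; rewrite /rdot -!big_split; apply: eq_bigr => j _ /=.
rewrite !(diagR_mulmxE, mxE) !(ReD, ImD, ReN, ImN, ReMr, ImMr).
by rewrite -[RHS]mul1r -(cs j); ring.
Qed.

Lemma Re_mulmx (A : 'M[R[i]]_d) u i : Re ((A *m u) i ord0) =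
  \sum_j (Re (A i j) * Re (u j ord0) - Im (A i j) * Im (u j ord0)).
Proof. by rewrite mxE Re_sum; apply: eq_bigr => j _; rewrite ReM. Qed.

Lemma Im_mulmx (A : 'M[R[i]]_d) u i : Im ((A *m u) i ord0) =
  \sum_j (Re (A i j) * Im (u j ord0) + Im (A i j) * Re (u j ord0)).
Proof. by rewrite mxE Im_sum; apply: eq_bigr => j _; rewrite ImM. Qed.

Lemma rdot_selfadjoint (A : 'M[R[i]]_d) u v :
  selfadjoint A -> rdot (A *m u) v = rdot u (A *m v).
Proof.
move=> sa; have A_conj i j : A j i = (A i j)^* by rewrite -{1}sa mxE.
have ReA i j : Re (A j i) = Re (A i j) by rewrite A_conj; case: (A i j).
have ImA i j : Im (A j i) = - Im (A i j) by rewrite A_conj; case: (A i j).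
rewrite /rdot.
under eq_bigr do rewrite Re_mulmx Im_mulmx !mulr_suml -big_split.
under [RHS]eq_bigr do rewrite Re_mulmx Im_mulmx !mulr_sumr -big_split.
rewrite [RHS]exchange_big /=; apply: eq_bigr => i _; apply: eq_bigr => j _.
by rewrite ReA ImA; ring.
Qed.

Section OperatorNorm.
Variable A : 'M[R[i]]_d.

Let rowabs i := \sum_j (`|Re (A i j)| + `|Im (A i j)|).

Lemma normr_Re_mulmx_le u i : `|Re ((A *m u) i ord0)| <= rowabs i * vnorm u.
Proof.
rewrite Re_mulmx mulr_suml; apply: le_trans (ler_norm_sum _ _ _) _.
apply: ler_sum => j _; apply: le_trans (ler_normB _ _) _.
by rewrite mulrDl !normrM lerD // ler_wpM2l ?normr_Re_le_vnorm ?normr_Im_le_vnorm.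
Qed.

Lemma normr_Im_mulmx_le u i : `|Im ((A *m u) i ord0)| <= rowabs i * vnorm u.
Proof.
rewrite Im_mulmx mulr_suml; apply: le_trans (ler_norm_sum _ _ _) _.
apply: ler_sum => j _; apply: le_trans (ler_normD _ _) _.
by rewrite mulrDl !normrM lerD // ler_wpM2l ?normr_Re_le_vnorm ?normr_Im_le_vnorm.
Qed.

Lemma opnorm_bounded :
  has_ubound [set vnorm (A *m v) | v in [set v : 'cV[R[i]]_d | vnorm v <= 1]]%classic.
Proof.
exists (Num.sqrt (\sum_i (rowabs i ^+ 2 + rowabs i ^+ 2))) => _ [v /= v1 <-].
have rowabs_ge0 i : 0 <= rowabs i by apply: sumr_ge0 => j _; rewrite addr_ge0.
have le_rowabs (k : R) i : `|k| <= rowabs i * vnorm v -> k ^+ 2 <= rowabs i ^+ 2.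
  by move=> kl; apply/sqr_le_of_normr_le/(le_trans kl); rewrite ler_piMr.
rewrite vnormE ler_sqrt; last by apply: sumr_ge0 => i _; rewrite addr_ge0 ?sqr_ge0.
apply: ler_sum => i _; rewrite -!expr2 lerD // le_rowabs //.
  exact: normr_Re_mulmx_le.
exact: normr_Im_mulmx_le.
Qed.

Lemma opnorm_ge0 : 0 <= opnorm A.
Proof.
rewrite -vnorm0 -(mulmx0 _ A); apply: (ub_le_sup opnorm_bounded).
by exists 0; rewrite /= ?vnorm0.
Qed.

Lemma vnorm_mulmx_le u : vnorm (A *m u) <= opnorm A * vnorm u.
Proof.
have [u0|u_neq0] := eqVneq (rdot u u) 0.
  by rewrite (rdot_eq0 u0) mulmx0 vnorm0 mulr0.
have u_gt0 : 0 < vnorm u by rewrite vnormE sqrtr_gt0 lt_def u_neq0 rdot_ge0.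
have u1 : vnorm ((vnorm u)^-1%:C *: u) <= 1.
  by rewrite vnormZ ger0_norm ?invr_ge0 ?(ltW u_gt0) // mulVf ?gt_eqF.
have /(ub_le_sup opnorm_bounded) : exists2 v : 'cV[R[i]]_d,
    vnorm v <= 1 & vnorm (A *m v) = vnorm (A *m ((vnorm u)^-1%:C *: u)).
  by exists ((vnorm u)^-1%:C *: u).
rewrite -scalemxAr vnormZ ger0_norm ?invr_ge0 ?(ltW u_gt0) //.
by rewrite mulrC ler_pdivrMr.
Qed.

Lemma rdot_mulmx_le u : rdot (A *m u) (A *m u) <= opnorm A ^+ 2 * rdot u u.
Proof.
rewrite -!sqr_vnorm -exprMn lerXn2r ?nnegrE ?vnorm_mulmx_le //.
  by rewrite vnormE sqrtr_ge0.
by rewrite mulr_ge0 ?opnorm_ge0 // vnormE sqrtr_ge0.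
Qed.

End OperatorNorm.

End RealInnerProduct.

Section Scheme.
Variables (R : realType) (d : nat) (w : 'I_d -> R) (A : 'M[R[i]]_d).
Variables (h : R) (psi1 phi : R -> R).
Hypothesis w_gt0 : forall j, 0 < w j.
Hypothesis h_gt0 : 0 < h.
Hypothesis psi1_sinc : forall x, psi1 x = sinc x * phi x.
Hypothesis A_selfadjoint : selfadjoint A.

Local Notation Om := (diagR w).
Local Notation cosOm := (fun_mx (@cos R) h w).
Local Notation sinOm := (fun_mx (@sin R) h w).
Local Notation sincOm := (fun_mx (@sinc R) h w).
Local Notation Psi1 := (fun_mx psi1 h w).
Local Notation Phi := (fun_mx phi h w).
Local Notation scheme := (step w A h psi1 phi).
Implicit Types (u v : 'cV[R[i]]_d) (x : 'cV[R[i]]_d * 'cV[R[i]]_d).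

(* [force] is F, [adjvel x] is v_n and [energy x] is E_n for x = (q_n, qd_n). *)
Definition force u := Phi *m (A *m (Phi *m u)).

Definition adjvel x := x.2 - (2^-1 * h)%:C *: (sincOm *m force x.1).

Definition energy x :=
  rdot (adjvel x) (adjvel x) + rdot (Om *m x.1) (Om *m x.1)
  + rdot (scheme x).1 (force x.1).

Lemma sinc_mul_hw j : sinc (h * w j) * (h * w j) = sin (h * w j).
Proof.
have hw_neq0 : h * w j != 0 by rewrite mulf_neq0 ?gt_eqF.
by rewrite /sinc (negbTE hw_neq0) divfK.
Qed.

Lemma Psi1_mulmx u : Psi1 *m u = sincOm *m (Phi *m u).
Proof.
by apply/matrixP => i j; rewrite /fun_mx !diagR_mulmxE psi1_sinc rmorphM mulrA.
Qed.

Lemma Om_h_sincOm u : Om *m (h%:C *: (sincOm *m u)) = sinOm *m u.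
Proof.
apply/matrixP => i j.
by rewrite /fun_mx !(diagR_mulmxE, mxE) -sinc_mul_hw !rmorphM /=; ring.
Qed.

Lemma step_fst x : (scheme x).1 = cosOm *m x.1 + h%:C *: (sincOm *m adjvel x).
Proof.
case: x => q p; rewrite /step /adjvel /force /= -!mulmxA Psi1_mulmx.
(* Abstracted so that [mxE] below does not expand the product with [A]. *)
move: (A *m (Phi *m q)) => y.
have -> : (2^-1 * h ^+ 2)%:C = (2^-1 * h)%:C * h%:C :> R[i].
  by rewrite -rmorphM expr2 mulrA.
by apply/matrixP => i j; rewrite /fun_mx !(diagR_mulmxE, mxE); ring.
Qed.

Lemma step_snd x :
  adjvel (scheme x) + h%:C *: (sincOm *m force (scheme x).1)
  = - (sinOm *m (Om *m x.1)) + cosOm *m adjvel x.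
Proof.
case: x => q p; rewrite /step /adjvel /force /= -!mulmxA !Psi1_mulmx.
move: (A *m (Phi *m q)) (A *m (Phi *m (_ + _ - _))) => y0 y1.
have -> : h%:C = (2^-1 * h)%:C * 2 :> R[i].
  by rewrite -(rmorph_nat (real_complex R) 2) -rmorphM mulrAC mulVf ?mul1r ?pnatr_eq0.
by apply/matrixP => i j; rewrite /fun_mx !(diagR_mulmxE, mxE); ring.
Qed.

Lemma step_fst_rev x :
  x.1 = cosOm *m (scheme x).1
        - h%:C *: (sincOm *m (adjvel (scheme x)
                              + h%:C *: (sincOm *m force (scheme x).1))).
Proof.
rewrite step_snd step_fst; case: x => q p /=; move: (adjvel _) => v.
apply/matrixP => i j; rewrite /fun_mx !(diagR_mulmxE, mxE).
have cos2Dsin2C : (cos (h * w i))%:C ^+ 2 + (sin (h * w i))%:C ^+ 2 = 1 :> R[i].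
  by rewrite -!rmorphXn -rmorphD cos2Dsin2.
by rewrite -[LHS]mul1r -cos2Dsin2C -!sinc_mul_hw !rmorphM /=; ring.
Qed.

Lemma Om_step_fst x : Om *m (scheme x).1 = cosOm *m (Om *m x.1) + sinOm *m adjvel x.
Proof. by rewrite step_fst mulmxDr Om_h_sincOm diagR_mulmxC. Qed.

Lemma step_rotation x :
  rdot (Om *m (scheme x).1) (Om *m (scheme x).1)
  + rdot (adjvel (scheme x) + h%:C *: (sincOm *m force (scheme x).1))
         (adjvel (scheme x) + h%:C *: (sincOm *m force (scheme x).1))
  = rdot (Om *m x.1) (Om *m x.1) + rdot (adjvel x) (adjvel x).
Proof. by rewrite Om_step_fst step_snd rdot_rotation // => j; apply: cos2Dsin2. Qed.

Lemma rdot_force u v : rdot (force u) v = rdot u (force v).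
Proof. by rewrite /force rdot_diagR rdot_selfadjoint // rdot_diagR. Qed.

Lemma rdot_step_force x :
  rdot (scheme x).1 (force x.1)
  = rdot (force (scheme x).1) (cosOm *m (scheme x).1)
    - h * rdot (sincOm *m force (scheme x).1)
               (adjvel (scheme x) + h%:C *: (sincOm *m force (scheme x).1)).
Proof.
rewrite -rdot_force {1}(step_fst_rev x) rdotBr rdotZr.
by rewrite -(rdot_diagR (fun j => sinc (h * w j))).
Qed.

Lemma energy_step x : energy (scheme x) = energy x.
Proof.
move: (step_rotation x) (rdot_step_force x); rewrite /energy.
(* Abstracting [scheme x] and the vectors keeps unification (in [rewrite] and
   [lra]) from unfolding [step] and matrix products. *)
generalize (scheme x) => y; rewrite (step_fst y).
move: (adjvel y) (adjvel x) y.1 x.1 => v' v q' q.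
rewrite rdot_sqrD !rdotZr rdotDl !rdotZl (rdot_diagR _ v') rdotDr rdotZr.
generalize (Om *m q') (Om *m q) (cosOm *m q') (force q') (force q) => Zq' Zq Cq' Fq' Fq.
by rewrite (rdotC Fq') (rdotC (sincOm *m Fq')); lra.
Qed.

Lemma energy_iter n x : energy (iter n scheme x) = energy x.
Proof. by elim: n => [//|n IHn]; rewrite iterS energy_step; exact: IHn. Qed.

Lemma rdot_fun_mx_le (f : R -> R) (K : R) u : (forall r, `|f r| <= K) ->
  rdot (fun_mx f h w *m u) (fun_mx f h w *m u) <= K ^+ 2 * rdot u u.
Proof. by move=> fK; apply: rdot_diagR_le => j; apply: sqr_le_of_normr_le. Qed.

Variable c0 : R.
Hypothesis psi1_le : forall r, `|psi1 r| <= c0.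
Hypothesis phi_le : forall r, `|phi r| <= c0.
Hypothesis h_le1 : h <= 1.
Hypothesis w_ge : forall j, 2^-1 * c0 ^+ 2 * opnorm A + 1 <= w j.

Let m := c0 ^+ 2 * opnorm A.

Lemma m_ge0 : 0 <= m.
Proof. by rewrite mulr_ge0 ?sqr_ge0 ?opnorm_ge0. Qed.

Lemma rdot_A_Phi_le u :
  rdot (A *m (Phi *m u)) (A *m (Phi *m u)) <= (c0 * opnorm A) ^+ 2 * rdot u u.
Proof.
apply: le_trans (rdot_mulmx_le _ _) _.
have -> : (c0 * opnorm A) ^+ 2 * rdot u u = opnorm A ^+ 2 * (c0 ^+ 2 * rdot u u).
  by ring.
by rewrite ler_wpM2l ?sqr_ge0 ?rdot_fun_mx_le.
Qed.

Lemma force_le u : rdot (force u) (force u) <= m ^+ 2 * rdot u u.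
Proof.
apply: le_trans (rdot_fun_mx_le _ phi_le) _.
have -> : m ^+ 2 * rdot u u = c0 ^+ 2 * ((c0 * opnorm A) ^+ 2 * rdot u u).
  by rewrite /m; ring.
by rewrite ler_wpM2l ?sqr_ge0 ?rdot_A_Phi_le.
Qed.

Lemma sincOm_force_le u :
  rdot (sincOm *m force u) (sincOm *m force u) <= m ^+ 2 * rdot u u.
Proof.
rewrite /force -Psi1_mulmx; apply: le_trans (rdot_fun_mx_le _ psi1_le) _.
have -> : m ^+ 2 * rdot u u = c0 ^+ 2 * ((c0 * opnorm A) ^+ 2 * rdot u u).
  by rewrite /m; ring.
by rewrite ler_wpM2l ?sqr_ge0 ?rdot_A_Phi_le.
Qed.

Lemma Om_ge u : (2^-1 * m + 1) ^+ 2 * rdot u u <= rdot (Om *m u) (Om *m u).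
Proof.
apply: rdot_diagR_ge => j; apply: lerXn2r; rewrite ?nnegrE.
- by have := m_ge0; lra.
- exact: ltW.
- by rewrite /m mulrA.
Qed.

Lemma rdot_le_Om u : rdot u u <= rdot (Om *m u) (Om *m u).
Proof.
apply: le_trans (Om_ge u); rewrite ler_peMl ?rdot_ge0 // exprn_ege1 //.
by have := m_ge0; lra.
Qed.

Lemma Om_step_fst_le x : rdot (Om *m (scheme x).1) (Om *m (scheme x).1)
  <= rdot (Om *m x.1) (Om *m x.1) + rdot (adjvel x) (adjvel x).
Proof. by rewrite -(step_rotation x) lerDl rdot_ge0. Qed.

Lemma adjvel_le x :
  rdot (adjvel x) (adjvel x) <= 2 * rdot x.2 x.2 + 2^-1 * m ^+ 2 * rdot x.1 x.1.
Proof.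
apply: le_trans (rdot_sqrB_le _ _) _; rewrite rdotZl rdotZr lerD2l.
have := sincOm_force_le x.1; have := rdot_ge0 (sincOm *m force x.1).
have : h * h <= 1 by rewrite -expr2 exprn_ile1 // ltW.
nra.
Qed.

Lemma energy_lower x : rdot x.1 x.1 <= 2 * energy x.
Proof.
have m0 := m_ge0; have t_gt0 : 0 < m + 1 by lra.
have hq' : (m + 1) * rdot (scheme x).1 (scheme x).1
           <= rdot (Om *m x.1) (Om *m x.1) + rdot (adjvel x) (adjvel x).
  apply: le_trans (le_trans _ (Om_ge _)) (Om_step_fst_le x).
  by apply: ler_wpM2r; [exact: rdot_ge0 | nra].
have := rdot_young (- (m + 1)) (scheme x).1 (force x.1).
have := force_le x.1; have := Om_ge x.1; have := rdot_ge0 x.1.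
have := rdot_ge0 (adjvel x); move: hq'; rewrite /energy sqrrN.
generalize (scheme x).1 (adjvel x) (force x.1) (Om *m x.1) => q' v Fq Zq.
move: (rdot q' q') (rdot q' Fq) (rdot Fq Fq) (rdot Zq Zq) (rdot v v) (rdot x.1 x.1).
move=> b' X F Z V b hq' hV hb hq hF hX.
have hq'' : (m + 1) ^+ 2 * b' <= (m + 1) * (Z + V).
  by rewrite expr2 -mulrA; apply: ler_wpM2l => //; exact: ltW.
have hW : (m + 1) * ((2^-1 * m + 1) ^+ 2 * b) <= (m + 1) * Z.
  by apply: ler_wpM2l => //; exact: ltW.
have hm : 0 <= ((m + 1) * (2^-1 * m + 1) ^+ 2 - m ^+ 2 - (m + 1)) * b.
  rewrite mulr_ge0 //.
  have -> : (m + 1) * (2^-1 * m + 1) ^+ 2 - m ^+ 2 - (m + 1)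
            = m * (4^-1 * m ^+ 2 + 4^-1 * m + 1) by field.
  by apply: mulr_ge0 => //; nra.
by rewrite -(ler_pM2l t_gt0); nra.
Qed.

Lemma energy_upper x :
  2 * energy x
  <= 3 * (2 * rdot x.2 x.2 + m ^+ 2 * rdot x.1 x.1 + rdot (Om *m x.1) (Om *m x.1)).
Proof.
have := rdot_young 1 (scheme x).1 (force x.1).
have := le_trans (rdot_le_Om (scheme x).1) (Om_step_fst_le x).
have := force_le x.1; have := adjvel_le x.
have := mulr_ge0 (sqr_ge0 m) (rdot_ge0 x.1).
rewrite /energy expr1n mul1r.
generalize (scheme x).1 (adjvel x) (force x.1) (Om *m x.1) => q' v Fq Zq; lra.
Qed.

Lemma iter_step_sqr_le n x :
  rdot (iter n scheme x).1 (iter n scheme x).1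
  <= 3 * (2 * rdot x.2 x.2 + m ^+ 2 * rdot x.1 x.1 + rdot (Om *m x.1) (Om *m x.1)).
Proof. by apply: le_trans (energy_lower _) _; rewrite energy_iter energy_upper. Qed.

End Scheme.

Theorem lemma5 (R : realType) :
  exists C : R -> R -> R -> R -> R -> R,
  forall (d : nat) (w : 'I_d -> R) (A : 'M[R[i]]_d) (h : R)
         (psi1 phi : R -> R) (c0 c1 : R) (q0 qd0 : 'cV[R[i]]_d),
    (0 < d)%N ->
    (forall j, 0 < w j) ->
    selfadjoint A ->
    0 < h -> h <= 1 ->
    (forall x, psi1 (- x) = psi1 x) ->
    (forall x, phi (- x) = phi x) ->
    (forall x, psi1 x = sinc x * phi x) ->
    0 <= c0 -> 0 <= c1 ->
    (forall x, `|psi1 x| <= c0) ->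
    (forall x, `|phi x| <= c0) ->
    (forall x, `|phi x - 1| <= c1 * `|x|) ->
    (* omega = min_j w_j >= c0^2 ||A|| / 2 + 1 *)
    (forall j, 2^-1 * c0 ^+ 2 * opnorm A + 1 <= w j) ->
    forall n : nat,
      vnorm (traj w A h psi1 phi q0 qd0 n).1
        <= C c0 (opnorm A) (vnorm q0) (vnorm (diagR w *m q0)) (vnorm qd0).
Proof.
exists (fun c0 a Q Z P => Num.sqrt (3 * (2 * P ^+ 2 + (c0 ^+ 2 * a * Q) ^+ 2 + Z ^+ 2))).
move=> d w A h psi1 phi c0 c1 q0 qd0 _ w_gt0 A_selfadjoint h_gt0 h_le1 _ _
  psi1_sinc _ _ psi1_le phi_le _ w_ge n.
rewrite vnormE; apply: ler_wsqrtr; rewrite exprMn !sqr_vnorm.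
exact: (iter_step_sqr_le w_gt0 h_gt0 psi1_sinc A_selfadjoint psi1_le phi_le h_le1 w_ge
  n (q0, qd0)).
Qed.
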